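(* Let $L$ be a simple Lie algebra over a field $k$ with $|k|>2$, generated by its pure extremal elements, such that there exists a Galois extension $k'/k$ of degree at most $2$ for which the extremal geometry of $L\otimes_k k'$ contains lines, and such that $L$ has symplectic pairs of extremal elements. Let $x,y,c,d\in E$ with $g(x,y)=g(c,d)=1$ such that the pairs $(x,c),(c,y),(y,d),(d,x)$ are symplectic; let $L=\bigoplus_i L_i$ and $L=\bigoplus_i L'_i$ be the $5$-gradings associated with $(x,y)$ and $(c,d)$ respectively, and put $V=L_{-1}\cap L'_{-1}$, $X=L_{-1}\cap L'_0$, $V'=L_{-1}\cap L'_1$, $X'=L_0\cap L'_{-1}$. Then $L_{-1}=V\oplus X\oplus V'$, $L_1=[y,V]\oplus[y,X]\oplus[y,V']$, $L'_{-1}=V\oplus X'\oplus[y,V]$, and $L'_1=V'\oplus[d,X']\oplus[y,V']$.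
   Context: A nonzero $a$ in a Lie algebra $M$ over $F$ is extremal if there is $g_a\colon M\to F$ with $[a,[a,u]]=2g_a(u)a$, $[[a,u],[a,w]]=g_a([u,w])a+g_a(w)[a,u]-g_a(u)[a,w]$, $[a,[u,[a,w]]]=g_a([u,w])a-g_a(w)[a,u]-g_a(u)[a,w]$ for all $u,w$; sandwiches satisfy $[a,[a,u]]=0=[a,[u,[a,w]]]$; pure = non-sandwich; $E$ = set of extremal elements of $L$; $g$ = unique symmetric bilinear form with $g(a,u)=g_a(u)$ for $a\in E$. Pure extremal $a,b$ with $Fa\ne Fb$ are collinear if $[a,b]=0$ and $\lambda a+\mu b$ is extremal or $0$ for all $\lambda,\mu$, symplectic if $[a,b]=0$ and $\lambda a+\mu b$ is extremal or $0$ only when $\lambda\mu=0$; the extremal geometry contains lines iff a collinear pair exists. For $a,b\in E$ with $g(a,b)=1$ the associated $5$-grading is $M_{-2}=ka$, $M_{-1}=[a,U]$, $M_0=\{l:[a,l]\in ka,[b,l]\in kb\}$, $M_1=[b,U]$, $M_2=kb$, $U=\{u:g(u,a)=g(u,b)=g(u,[a,b])=0\}$. *)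

From HB Require Import structures.
From mathcomp Require Import all_boot all_order all_algebra.
From mathcomp Require Import falgebra fieldext separable galois.
Set Implicit Arguments. Unset Strict Implicit. Unset Printing Implicit Defensive.
Import Order.TTheory GRing.Theory Num.Theory.
Local Open Scope ring_scope.

Section LieDefs.
Variables (F : fieldType) (V : lmodType F) (br : V -> V -> V).

Definition is_lie : Prop :=
  (forall (a : F) u v w, br (a *: u + v) w = a *: br u w + br v w) /\
  (forall (a : F) u v w, br w (a *: u + v) = a *: br w u + br w v) /\
  (forall u, br u u = 0) /\
  (forall u v w, br u (br v w) + br v (br w u) + br w (br u v) = 0).

Definition subspace (S : V -> Prop) : Prop :=
  S 0 /\ forall (a : F) u v, S u -> S v -> S (a *: u + v).

Definition simple_lie : Prop :=
  (exists u v, br u v <> 0) /\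
  forall I : V -> Prop, subspace I -> (forall u v, I v -> I (br u v)) ->
    (forall v, I v -> v = 0) \/ (forall v, I v).

Definition extremal_with (a : V) (ga : V -> F) : Prop :=
  forall u w,
    br a (br a u) = (2%:R * ga u) *: a /\
    br (br a u) (br a w) = ga (br u w) *: a + ga w *: br a u - ga u *: br a w /\
    br a (br u (br a w)) = ga (br u w) *: a - ga w *: br a u - ga u *: br a w.

Definition extremal (a : V) : Prop := a <> 0 /\ exists ga, extremal_with a ga.

Definition sandwich (a : V) : Prop :=
  forall u w, br a (br a u) = 0 /\ br a (br u (br a w)) = 0.

Definition pure_extremal (a : V) : Prop := extremal a /\ ~ sandwich a.

Definition distinct_points (a b : V) : Prop :=
  (forall t : F, b <> t *: a) /\ (forall t : F, a <> t *: b).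

Definition collinear (a b : V) : Prop :=
  pure_extremal a /\ pure_extremal b /\ distinct_points a b /\ br a b = 0 /\
  forall l m : F, extremal (l *: a + m *: b) \/ l *: a + m *: b = 0.

Definition symplectic (a b : V) : Prop :=
  pure_extremal a /\ pure_extremal b /\ distinct_points a b /\ br a b = 0 /\
  forall l m : F, (extremal (l *: a + m *: b) \/ l *: a + m *: b = 0) -> l * m = 0.

Definition has_lines : Prop := exists a b, collinear a b.

Definition generated_by_pure_extremal : Prop :=
  forall S : V -> Prop, subspace S -> (forall u v, S u -> S v -> S (br u v)) ->
    (forall a, pure_extremal a -> S a) -> forall u, S u.

Definition extremal_form (g : V -> V -> F) : Prop :=
  (forall u v, g u v = g v u) /\
  (forall (a : F) u v w, g (a *: u + v) w = a * g u w + g v w) /\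
  (forall a, extremal a -> extremal_with a (g a)).

(* 5-grading associated with (a, b), g(a,b) = 1 *)
Definition grU (g : V -> V -> F) (a b : V) (u : V) : Prop :=
  g u a = 0 /\ g u b = 0 /\ g u (br a b) = 0.
Definition grade_m1 g (a b : V) (l : V) : Prop := exists u, grU g a b u /\ l = br a u.
Definition grade_0 (a b : V) (l : V) : Prop :=
  (exists t : F, br a l = t *: a) /\ (exists t : F, br b l = t *: b).
Definition grade_1 g (a b : V) (l : V) : Prop := exists u, grU g a b u /\ l = br b u.

Definition ad_image (y : V) (P : V -> Prop) (l : V) : Prop := exists v, P v /\ l = br y v.

End LieDefs.

Definition inter {T} (A B : T -> Prop) (x : T) : Prop := A x /\ B x.

Definition dsum3 (F : fieldType) (V : lmodType F) (A B C D : V -> Prop) : Prop :=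
  (forall l, A l <-> exists b c d, B b /\ C c /\ D d /\ l = b + c + d) /\
  (forall b c d, B b -> C c -> D d -> b + c + d = 0 -> b = 0 /\ c = 0 /\ d = 0).

(* (M, brM, iota) is the base change L (x)_k k' : iota is k-linear, a Lie
   homomorphism, and the k'-linear extension L (x)_k k' -> M is bijective,
   i.e. with a k-basis (e_i) of k', every m in M is uniquely sum_i e_i iota(u_i). *)
Definition is_base_change (k : fieldType) (k' : fieldExtType k)
  (L : lmodType k) (M : lmodType k') (brL : L -> L -> L) (brM : M -> M -> M)
  (iota : L -> M) : Prop :=
  (forall (a : k) u v, iota (a *: u + v) = a%:A *: iota u + iota v) /\
  (forall u v, iota (brL u v) = brM (iota u) (iota v)) /\
  (forall m : M, exists u : 'I_(\dim (@fullv _ k')) -> L,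
     m = \sum_i tnth (vbasis fullv) i *: iota (u i) /\
     forall u' : 'I_(\dim (@fullv _ k')) -> L,
       m = \sum_i tnth (vbasis fullv) i *: iota (u' i) -> forall i, u' i = u i).

From HB Require Import structures.
From mathcomp Require Import all_boot all_order all_algebra.
From mathcomp Require Import falgebra fieldext separable galois.
From mathcomp Require Import ring.
Set Implicit Arguments. Unset Strict Implicit. Unset Printing Implicit Defensive.
Import Order.TTheory GRing.Theory Num.Theory.
Local Open Scope ring_scope.

(* The grading of a pair (a, b) of pure extremal elements with g(a, b) = 1 is
   read off from ad a and ad b: on the space U of elements orthogonal to a, b
   and [a, b], the maps -ad a ad b, 1 + ad a ad b + ad b ad a and -ad b ad a
   project onto L_-1, L_0 and L_1, and ad b : L_-1 -> L_1 is bijective with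
   inverse -ad a.  Since x, y commute with c, d, each graded piece of one pair
   lies in the U of the other pair and is stable under its ad's, so it splits
   along the other grading; ad y transports the splitting of L_-1 to L_1.
   The one identity not read off the extremal axioms directly is the
   invariance g([a, b], w) = g(a, [b, w]) for pure a, b, which follows from the
   uniqueness of g_p for p = exp(ad a) b. *)

Section LinearTerms.
Variables (R : pzRingType) (V : lmodType R).

Inductive lterm :=
  | LAtom of nat | LZero | LAdd of lterm & lterm | LOpp of lterm | LScale of R & lterm.

Fixpoint lterm_eval (env : seq V) t : V :=
  match t with
  | LAtom i => nth 0 env i
  | LZero => 0
  | LAdd t1 t2 => lterm_eval env t1 + lterm_eval env t2
  | LOpp t => - lterm_eval env t
  | LScale s t => s *: lterm_eval env t
  end.

Fixpoint lterm_coef t (j : nat) : R :=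
  match t with
  | LAtom i => (i == j)%:R
  | LZero => 0
  | LAdd t1 t2 => lterm_coef t1 j + lterm_coef t2 j
  | LOpp t => - lterm_coef t j
  | LScale s t => s * lterm_coef t j
  end.

Lemma lterm_evalE env t :
  lterm_eval env t = \sum_(j < size env) lterm_coef t j *: nth 0 env j.
Proof.
elim: t => /= [i||t1 -> t2 ->|t ->|s t ->].
- case: (ltnP i (size env)) => [lt_i|le_i].
    rewrite (bigD1 (Ordinal lt_i)) //= eqxx scale1r big1 ?addr0 // => j /negP ne_j.
    by case: eqP => [ij|]; [case: ne_j; apply/eqP/val_inj | rewrite scale0r].
  rewrite nth_default // big1 // => j _.
  by case: eqP => [ij|]; [move: (ltn_ord j); rewrite -ij ltnNge le_i | rewrite scale0r].
- by rewrite big1 // => j _; rewrite scale0r.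
- by rewrite -big_split; apply: eq_bigr => j _; rewrite scalerDl.
- by rewrite -sumrN; apply: eq_bigr => j _; rewrite scaleNr.
- by rewrite scaler_sumr; apply: eq_bigr => j _; rewrite scalerA.
Qed.

Fixpoint coefs_agree (n : nat) t1 t2 : Prop :=
  if n is n'.+1 then coefs_agree n' t1 t2 /\ lterm_coef t1 n' = lterm_coef t2 n'
  else True.

Lemma lterm_eval_eq env t1 t2 :
  coefs_agree (size env) t1 t2 -> lterm_eval env t1 = lterm_eval env t2.
Proof.
move=> agree; rewrite !lterm_evalE; apply: eq_bigr => j _.
suff coef_eq m : (m < size env)%N -> lterm_coef t1 m = lterm_coef t2 m by rewrite coef_eq.
elim: (size env) agree m => // n IHn /= [agree_n agree_last] m.
by rewrite ltnS leq_eqVlt => /predU1P [->|/(IHn agree_n)].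
Qed.

End LinearTerms.

Ltac lterm_index t env :=
  lazymatch env with
  | t :: _ => constr:(0%N)
  | _ :: ?env' => let n := lterm_index t env' in constr:(n.+1)
  end.

Ltac lterm_size env :=
  lazymatch env with
  | nil => constr:(0%N)
  | _ :: ?env' => let n := lterm_size env' in constr:(n.+1)
  end.

Ltac lterm_snoc env t :=
  lazymatch env with
  | nil => constr:(t :: nil)
  | ?u :: ?env' => let env'' := lterm_snoc env' t in constr:(u :: env'')
  end.

Ltac lterm_reify R env t :=
  lazymatch t with
  | 0 => constr:((@LZero R, env))
  | ?u + ?v =>
      lazymatch lterm_reify R env u with (?tu, ?env1) =>
      lazymatch lterm_reify R env1 v with (?tv, ?env2) =>
        constr:((LAdd tu tv, env2)) end end
  | - ?u =>
      lazymatch lterm_reify R env u with (?tu, ?env1) => constr:((LOpp tu, env1)) end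
  | ?s *: ?u =>
      lazymatch lterm_reify R env u with (?tu, ?env1) => constr:((LScale s tu, env1)) end
  | _ =>
      match constr:(Set) with
      | _ => let n := lterm_index t env in constr:((@LAtom R n, env))
      | _ => let n := lterm_size env in let env' := lterm_snoc env t in
             constr:((@LAtom R n, env'))
      end
  end.

(* Proves an identity between linear combinations in a module by treating the
   remaining subterms as atoms and comparing their coefficients with [ring]. *)
Ltac lincomb R :=
  lazymatch goal with |- ?lhs = ?rhs =>
  let V := type of lhs in
  lazymatch lterm_reify R (@nil V) lhs with (?t1, ?env1) =>
  lazymatch lterm_reify R env1 rhs with (?t2, ?env) =>
    change (lterm_eval env t1 = lterm_eval env t2);
    apply: lterm_eval_eq; rewrite /=; repeat split; ring
  end end end.

Lemma subspaceD (R : fieldType) (V : lmodType R) (S : V -> Prop) u v :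
  subspace S -> S u -> S v -> S (u + v).
Proof. by case=> _ S_lin Su Sv; rewrite -[u]scale1r; apply: S_lin. Qed.

Lemma subspaceN (R : fieldType) (V : lmodType R) (S : V -> Prop) u :
  subspace S -> S u -> S (- u).
Proof. by case=> S0 S_lin Su; rewrite -scaleN1r -[_ *: u]addr0; apply: S_lin. Qed.

Lemma dsum3_ext (R : fieldType) (V : lmodType R) (A A' B B' C C' D D' : V -> Prop) :
  (forall l, A l <-> A' l) -> (forall l, B l <-> B' l) ->
  (forall l, C l <-> C' l) -> (forall l, D l <-> D' l) ->
  dsum3 A B C D -> dsum3 A' B' C' D'.
Proof.
move=> AA' BB' CC' DD' [span indep]; split.
  move=> l; rewrite -AA' span; split.
    by case=> b [c [d [/BB' Bb [/CC' Cc [/DD' Dd ->]]]]]; exists b, c, d.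
  by case=> b [c [d [/BB' Bb [/CC' Cc [/DD' Dd ->]]]]]; exists b, c, d.
by move=> b c d /BB' Bb /CC' Cc /DD' Dd; apply: indep.
Qed.

Lemma interC (T : Type) (A B : T -> Prop) : forall l, inter A B l <-> inter B A l.
Proof. by move=> l; apply: and_comm. Qed.

Section ExtremalElements.
Variables (k : fieldType) (L : lmodType k) (br : L -> L -> L) (g : L -> L -> k).
Hypotheses (Hlie : is_lie br) (Hg : extremal_form br g).

Lemma brDl u v w : br (u + v) w = br u w + br v w.
Proof. by have [brl _] := Hlie; have := brl 1 u v w; rewrite !scale1r. Qed.

Lemma brDr u v w : br w (u + v) = br w u + br w v.
Proof. by have [_ [brr _]] := Hlie; have := brr 1 u v w; rewrite !scale1r. Qed.

Lemma br0l w : br 0 w = 0.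
Proof. by apply: (addrI (br 0 w)); rewrite addr0 -brDl addr0. Qed.

Lemma br0r w : br w 0 = 0.
Proof. by apply: (addrI (br w 0)); rewrite addr0 -brDr addr0. Qed.

Lemma brZl a u w : br (a *: u) w = a *: br u w.
Proof. by have [brl _] := Hlie; rewrite -[a *: u]addr0 brl br0l addr0. Qed.

Lemma brZr a u w : br w (a *: u) = a *: br w u.
Proof. by have [_ [brr _]] := Hlie; rewrite -[a *: u]addr0 brr br0r addr0. Qed.

Lemma brNl u w : br (- u) w = - br u w.
Proof. by rewrite -scaleN1r brZl scaleN1r. Qed.

Lemma brNr u w : br w (- u) = - br w u.
Proof. by rewrite -scaleN1r brZr scaleN1r. Qed.

Lemma brxx u : br u u = 0.
Proof. by have [_ [_ []]] := Hlie. Qed.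

Lemma brC u v : br u v = - br v u.
Proof.
apply/eqP; rewrite -addr_eq0; apply/eqP.
by have := brxx (u + v); rewrite brDl !brDr !brxx add0r addr0.
Qed.

Lemma br_eq0C u v : br u v = 0 -> br v u = 0.
Proof. by rewrite brC => /eqP; rewrite oppr_eq0 => /eqP. Qed.

Lemma br_derivation u v w : br u (br v w) = br (br u v) w + br v (br u w).
Proof.
have [_ [_ [_ jacobi]]] := Hlie.
rewrite [br (br u v) w]brC [br u w]brC brNr -opprD.
by apply/eqP; rewrite -addr_eq0 [br w _ + _]addrC addrA jacobi.
Qed.

Lemma br_commuting a e u : br a e = 0 -> br a (br e u) = br e (br a u).
Proof. by move=> ae; rewrite br_derivation ae br0l add0r. Qed.

Lemma dsum3_ad_image e (A B C D : L -> Prop) :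
  (forall u, A u -> br e u = 0 -> u = 0) -> dsum3 A B C D ->
  dsum3 (ad_image br e A) (ad_image br e B) (ad_image br e C) (ad_image br e D).
Proof.
move=> inj_e [span indep]; split.
  move=> l; split.
    case=> u [/span [b [c [d [Bb [Cc [Dd ->]]]]]] ->].
    exists (br e b), (br e c), (br e d).
    by do !split; [exists b | exists c | exists d | rewrite !brDr].
  case=> _ [_ [_ [[b [Bb ->]] [[c [Cc ->]] [[d [Dd ->]] ->]]]]].
  by exists (b + c + d); split; [apply/span; exists b, c, d | rewrite !brDr].
move=> _ _ _ [b [Bb ->]] [c [Cc ->]] [d [Dd ->]]; rewrite -!brDr => sum0.
have Asum : A (b + c + d) by apply/span; exists b, c, d.
have [-> [-> ->]] := indep b c d Bb Cc Dd (inj_e _ Asum sum0).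
by rewrite br0r.
Qed.

Lemma subspace_ad_image e (S : L -> Prop) : subspace S -> subspace (ad_image br e S).
Proof.
move=> [S0 S_lin]; split; first by exists 0; rewrite br0r.
move=> s _ _ [u [Su ->]] [v [Sv ->]]; exists (s *: u + v).
by split; [apply: S_lin | rewrite brDr brZr].
Qed.

Lemma pure_extremalN a : pure_extremal br a -> pure_extremal br (- a).
Proof.
case=> [[a0 [ga Ea]] not_sandwich]; split; first split.
- by move/eqP; rewrite oppr_eq0 => /eqP.
- exists (fun u => - ga u) => u w; have [E1 [E2 E3]] := Ea u w.
  by rewrite !(brNl, brNr) !opprK E1 E2 E3; split; [|split]; lincomb k.
- move=> sandwichN; apply: not_sandwich => u w; have [S1 S2] := sandwichN u w.
  by move: S1 S2; rewrite !(brNl, brNr) !opprK.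
Qed.

(* Two forms for the same pure [p] would force [char k = 2] and [ad p] to have
   rank at most one, which makes [p] a sandwich. *)
Lemma extremal_with_uniq p g1 g2 : pure_extremal br p ->
  extremal_with br p g1 -> extremal_with br p g2 -> forall u, g1 u = g2 u.
Proof.
case=> [[p0 _] not_sandwich] E1 E2 u0; apply/eqP/negPn/negP => g12_neq.
have delta0 : g1 u0 - g2 u0 != 0 by rewrite subr_eq0.
have char2 : 2%:R = 0 :> k.
  have [E1u0 _] := E1 u0 u0; have [E2u0 _] := E2 u0 u0; move: E1u0.
  rewrite E2u0 => /eqP; rewrite eq_sym -subr_eq0 -scalerBl scaler_eq0 -mulrBr.
  by rewrite mulf_eq0 (negbTE delta0) orbF => /orP [/eqP //|/eqP /p0].
have adp_rank1 w : exists al be, br p w = al *: p + be *: br p u0.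
  have [_ [E1w _]] := E1 u0 w; have [_ [E2w _]] := E2 u0 w.
  exists ((g1 u0 - g2 u0)^-1 * (g1 (br u0 w) - g2 (br u0 w))).
  exists ((g1 u0 - g2 u0)^-1 * (g1 w - g2 w)).
  have : (g1 u0 - g2 u0) *: br p w =
         (g1 (br u0 w) - g2 (br u0 w)) *: p + (g1 w - g2 w) *: br p u0.
    apply/eqP; rewrite -subr_eq0; apply/eqP.
    have -> : 0 = (g2 (br u0 w) *: p + g2 w *: br p u0 - g2 u0 *: br p w) -
              (g1 (br u0 w) *: p + g1 w *: br p u0 - g1 u0 *: br p w).
      by rewrite -E1w -E2w subrr.
    lincomb k.
  by move=> H; rewrite -!scalerA -scalerDr -H scalerA mulVf // scale1r.
have adp2 u : br p (br p u) = 0.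
  by have [E1u _] := E1 u u; rewrite E1u char2 mul0r scale0r.
apply: not_sandwich => u w; split; first exact: adp2.
rewrite br_derivation adp2 br0r addr0.
have [a1 [b1 ->]] := adp_rank1 u; have [a2 [b2 ->]] := adp_rank1 w.
rewrite !(brDl, brDr, brZl, brZr) brxx adp2 [br (br p u0) p]brC adp2 brxx.
lincomb k.
Qed.

Lemma gC u v : g u v = g v u.
Proof. by case: Hg. Qed.

Lemma gDl u v w : g (u + v) w = g u w + g v w.
Proof. by case: Hg => _ [glin _]; have := glin 1 u v w; rewrite scale1r mul1r. Qed.

Lemma g0l w : g 0 w = 0.
Proof. by apply: (addrI (g 0 w)); rewrite addr0 -gDl addr0. Qed.

Lemma gZl a u w : g (a *: u) w = a * g u w.
Proof. by case: Hg => _ [glin _]; have := glin a u 0 w; rewrite addr0 g0l addr0. Qed.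

Lemma gNl u w : g (- u) w = - g u w.
Proof. by rewrite -scaleN1r gZl mulN1r. Qed.

Lemma gDr u v w : g w (u + v) = g w u + g w v.
Proof. by rewrite gC gDl !(gC w). Qed.

Lemma gZr a u w : g w (a *: u) = a * g w u.
Proof. by rewrite gC gZl gC. Qed.

Lemma gNr u w : g w (- u) = - g w u.
Proof. by rewrite gC gNl gC. Qed.

Lemma extremal_with_g a : extremal br a -> extremal_with br a (g a).
Proof. by case: Hg => _ [_]; apply. Qed.

Lemma pure_extremal_with_g a : pure_extremal br a -> extremal_with br a (g a).
Proof. by case=> /extremal_with_g. Qed.

Lemma g_commuting a b : pure_extremal br a -> br a b = 0 -> g a b = 0.
Proof.
move=> Pa ab; apply/eqP/negPn/negP => gab_neq; case: Pa (Pa) => [[a0 _] not_sandwich].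
move=> /pure_extremal_with_g Ea; apply: not_sandwich => u w.
have ad_a_line v : br a v = ((g a b)^-1 * g a (br b v)) *: a.
  have [_ [E2 _]] := Ea b v; move/eqP: E2.
  rewrite ab br0l scaler0 addr0 eq_sym subr_eq0 => /eqP E2.
  by rewrite -scalerA E2 scalerA mulVf // scale1r.
split; first by rewrite (ad_a_line u) brZr brxx scaler0.
by rewrite (ad_a_line w) !brZr [br u a]brC brNr (ad_a_line u) brZr brxx !(scaler0, oppr0).
Qed.

Lemma g_br_commuting a b w : pure_extremal br a -> br a b = 0 -> g a (br b w) = 0.
Proof.
move=> Pa ab; have [[a0 _] _] := Pa; have [_ [E2 _]] := pure_extremal_with_g Pa b w.
move: E2; rewrite ab br0l (g_commuting Pa ab) scaler0 scale0r addr0 subr0 => /esym/eqP.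
by rewrite scaler_eq0 => /orP [/eqP //|/eqP /a0].
Qed.

Definition expad a u := u + br a u + g a u *: a.

Lemma expadD a u v : expad a (u + v) = expad a u + expad a v.
Proof. by rewrite /expad brDr gDr; lincomb k. Qed.

Lemma expadZ a s u : expad a (s *: u) = s *: expad a u.
Proof. by rewrite /expad brZr gZr; lincomb k. Qed.

Lemma expadN a u : expad a (- u) = - expad a u.
Proof. by rewrite -scaleN1r expadZ scaleN1r. Qed.

Lemma expad0 a : expad a 0 = 0.
Proof. by have := expadZ a 0 0; rewrite !scale0r. Qed.

Lemma expad_br a u w : extremal br a ->
  expad a (br u w) = br (expad a u) (expad a w).
Proof.
move=> /extremal_with_g Ea; have [E1u [E2 _]] := Ea u w; have [E1w _] := Ea w u.
rewrite /expad !(brDl, brDr, brZl, brZr) E1w brxx [br u a]brC [br (br a u) a]brC.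
by rewrite E1u E2 br_derivation; lincomb k.
Qed.

Lemma expadK a u : pure_extremal br a -> expad (- a) (expad a u) = u.
Proof.
move=> Pa; have [E1 _] := pure_extremal_with_g Pa u u.
have gaa := g_commuting Pa (brxx a); have gaaw := g_br_commuting _ Pa (brxx a).
rewrite /expad !(brNl, gNl, brDr, brZr, gDr, gZr) gaa gaaw E1 brxx.
lincomb k.
Qed.

Lemma expadKV a u : pure_extremal br a -> expad a (expad (- a) u) = u.
Proof. by move=> /pure_extremalN /expadK; rewrite opprK. Qed.

Lemma extremal_with_expad a b : pure_extremal br a -> extremal br b ->
  extremal_with br (expad a b) (fun w => g b (expad (- a) w)).
Proof.
move=> Pa /extremal_with_g Eb u w.
have Ea : extremal br a by case: Pa.
have [u' ->] : exists u', u = expad a u' by exists (expad (- a) u); rewrite expadKV.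
have [w' ->] : exists w', w = expad a w' by exists (expad (- a) w); rewrite expadKV.
rewrite -!expad_br // !expadK //.
have [E1 [E2 E3]] := Eb u' w'.
by rewrite E1 E2 E3 !(expadD, expadN, expadZ); split; [|split]; lincomb k.
Qed.

Lemma pure_expad a b : pure_extremal br a -> pure_extremal br b ->
  pure_extremal br (expad a b).
Proof.
move=> Pa [[b0 Eb] not_sandwich]; have Ea : extremal br a by case: Pa.
split; first split.
- by move=> eb0; apply: b0; rewrite -(expadK b Pa) eb0 expad0.
- by exists (fun w => g b (expad (- a) w)); apply: extremal_with_expad.
- move=> sandwich_eb; apply: not_sandwich => u w.
  have [S1 _] := sandwich_eb (expad a u) w.
  have [_ S2] := sandwich_eb (expad a u) (expad a w).
  rewrite -!expad_br // in S1 S2.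
  by rewrite -(expadK (br b (br b u)) Pa) -(expadK (br b (br u (br b w))) Pa) S1 S2 expad0.
Qed.

(* Uniqueness of the extremal form of [expad a b] gives
   g (expad a b) w = g b (expad (- a) w), whose linear part in [a] is the claim. *)
Lemma g_br_swap a b w : pure_extremal br a -> pure_extremal br b ->
  g (br a b) w = - g b (br a w).
Proof.
move=> Pa Pb; have Peb := pure_expad Pa Pb.
have := extremal_with_uniq Peb (pure_extremal_with_g Peb)
                           (extremal_with_expad Pa (proj1 Pb)) w.
rewrite /expad !(gDl, gZl, brNl, gNl, gDr, gZr, gNr) (gC b a) => /eqP.
by rewrite -subr_eq0 => /eqP eq0; apply/eqP; rewrite -subr_eq0 -eq0; apply/eqP; ring.
Qed.

Lemma g_br_assoc a b w : pure_extremal br a -> pure_extremal br b ->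
  g (br a b) w = g a (br b w).
Proof. by move=> Pa Pb; rewrite brC gNl g_br_swap ?opprK. Qed.

Definition ad_stable e (P : L -> Prop) := forall l, P l -> P (br e l).

Lemma grU_subspace a b : subspace (grU br g a b).
Proof.
split; first by rewrite /grU !g0l.
move=> s u v [u1 [u2 u3]] [v1 [v2 v3]].
by rewrite /grU !(gDl, gZl) u1 u2 u3 v1 v2 v3 mulr0 addr0.
Qed.

Lemma grade_m1_subspace a b : subspace (grade_m1 br g a b).
Proof. exact: subspace_ad_image (grU_subspace a b). Qed.

Lemma grade_1_subspace a b : subspace (grade_1 br g a b).
Proof. exact: subspace_ad_image (grU_subspace a b). Qed.

Lemma grade_0_subspace a b : subspace (grade_0 br a b).
Proof.
split; first by split; exists 0; rewrite br0r scale0r.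
move=> s u v [[t1 au] [t2 bu]] [[t3 av] [t4 bv]]; split.
  by exists (s * t1 + t3); rewrite brDr brZr au av scalerDl scalerA.
by exists (s * t2 + t4); rewrite brDr brZr bu bv scalerDl scalerA.
Qed.

Lemma grU_sym a b u : grU br g a b u -> grU br g b a u.
Proof. by case=> ua [ub uab]; do !split => //; rewrite brC gNr uab oppr0. Qed.

Lemma grade_1E a b l : grade_1 br g a b l <-> grade_m1 br g b a l.
Proof. by split; case=> u [/grU_sym Uu ->]; exists u. Qed.

Section PurePair.
Variables a b : L.
Hypotheses (Pa : pure_extremal br a) (Pb : pure_extremal br b).

Lemma grU_g_br l : grU br g a b l -> g a (br b l) = 0.
Proof. by case=> _ [_ lab]; rewrite -g_br_assoc // gC. Qed.

Lemma grU_br_commuting e u : br a e = 0 -> br b e = 0 -> grU br g a b (br e u).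
Proof.
move=> ae be; split; [|split]; rewrite gC; try exact: g_br_commuting.
by rewrite g_br_assoc // br_commuting // g_br_commuting.
Qed.

Lemma grade_m1_grU n : grade_m1 br g a b n -> grU br g a b n.
Proof.
case=> u [[ua [ub uab]] ->]; have [E1 _] := pure_extremal_with_g Pa u u.
split; [|split]; rewrite gC.
- exact: g_br_commuting (brxx a).
- by rewrite -g_br_assoc // brC gNl gC uab oppr0.
- by rewrite g_br_swap // E1 gZr gC ua mulr0 mul0r oppr0.
Qed.

Lemma br_grade_m1 n : grade_m1 br g a b n -> br a n = 0.
Proof.
case=> u [[ua _] ->]; have [E1 _] := pure_extremal_with_g Pa u u.
by rewrite E1 gC ua mulr0 scale0r.
Qed.

Lemma ad_grade_m1 n : grade_m1 br g a b n -> grade_1 br g a b (br b n).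
Proof. by move=> Nn; exists n; split=> //; apply: grade_m1_grU. Qed.

Lemma grade_m1_stable e : br a e = 0 -> br b e = 0 ->
  ad_stable e (grade_m1 br g a b).
Proof.
move=> ae be _ [u [_ ->]]; exists (br e u).
by split; [exact: grU_br_commuting | rewrite (br_commuting _ ae)].
Qed.

Lemma grU_proj_m1 l : grU br g a b l -> grade_m1 br g a b (- br a (br b l)).
Proof.
move=> Ul; exists (- br b l); split; last by rewrite brNr.
apply: subspaceN (grU_subspace a b) _.
have [E1 _] := pure_extremal_with_g Pb l l.
split; [|split]; rewrite gC.
- exact: grU_g_br.
- exact: g_br_commuting (brxx b).
- by case: Ul => _ [lb _]; rewrite g_br_assoc // E1 gZr gC lb mulr0 mul0r.
Qed.

Hypothesis Hab : g a b = 1.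

Lemma grade_m1_adK n : grade_m1 br g a b n -> br a (br b n) = - n.
Proof.
case=> u [[ua [_ uab]] ->]; have [_ [_ E3]] := pure_extremal_with_g Pa b u.
by rewrite E3 -g_br_assoc // gC uab (gC a u) ua Hab !scale0r scale1r; lincomb k.
Qed.

Lemma grU_proj_0 l : grU br g a b l ->
  grade_0 br a b (l + br a (br b l) + br b (br a l)).
Proof.
move=> Ul; have [la [lb _]] := Ul.
have abl := grU_g_br Ul.
have bal : g b (br a l) = 0 by rewrite -g_br_assoc // brC gNl g_br_assoc // abl oppr0.
have Hba : g b a = 1 by rewrite gC.
have [E1a _] := pure_extremal_with_g Pa (br b l) l.
have [_ [_ E3a]] := pure_extremal_with_g Pa b l.
have [E1b _] := pure_extremal_with_g Pb (br a l) l.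
have [_ [_ E3b]] := pure_extremal_with_g Pb a l.
split; exists 0; rewrite scale0r !brDr.
  by rewrite E1a E3a abl gC la Hab; lincomb k.
by rewrite E1b E3b bal gC lb Hba; lincomb k.
Qed.

End PurePair.

Lemma grade_0_stable a b e : br a e = 0 -> br b e = 0 ->
  ad_stable e (grade_0 br a b).
Proof.
move=> ae be z [[t az] [s bz]]; split; exists 0; rewrite scale0r.
  by rewrite br_commuting // az brZr (br_eq0C ae) scaler0.
by rewrite br_commuting // bz brZr (br_eq0C be) scaler0.
Qed.

Section PurePairSwap.
Variables a b : L.
Hypotheses (Pa : pure_extremal br a) (Pb : pure_extremal br b).

Lemma br_grade_1 p : grade_1 br g a b p -> br b p = 0.
Proof. by move=> /grade_1E /(br_grade_m1 Pb). Qed.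

Lemma ad_grade_1 p : grade_1 br g a b p -> grade_m1 br g a b (br a p).
Proof. by move=> /grade_1E /(ad_grade_m1 Pb Pa) /grade_1E. Qed.

Lemma grade_1_stable e : br a e = 0 -> br b e = 0 ->
  ad_stable e (grade_1 br g a b).
Proof. by move=> ae be p /grade_1E /(grade_m1_stable Pb Pa be ae) /grade_1E. Qed.

Lemma grU_proj_1 l : grU br g a b l -> grade_1 br g a b (- br b (br a l)).
Proof. by move=> /grU_sym /(grU_proj_m1 Pb Pa) /grade_1E. Qed.

Hypothesis Hab : g a b = 1.

Lemma grade_1_adK p : grade_1 br g a b p -> br b (br a p) = - p.
Proof. by move=> /grade_1E; apply: grade_m1_adK; rewrite // gC. Qed.

Lemma grade_m1_scaled n s : grade_m1 br g a b n -> n = s *: br a b -> n = 0.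
Proof.
move=> Nn n_def; have [E1 _] := pure_extremal_with_g Pb a a.
have b_ab : br b (br a b) = - (2%:R *: b).
  by rewrite [br a b]brC brNr E1 gC Hab mulr1.
have : - n = - (n + n).
  by rewrite -{1}(grade_m1_adK Pa Pb Hab Nn) n_def brZr b_ab !(brNr, brZr); lincomb k.
by move/oppr_inj => nn; apply: (addrI n); rewrite addr0 -nn.
Qed.

End PurePairSwap.

Lemma grade_direct a b n z p :
  pure_extremal br a -> pure_extremal br b -> g a b = 1 ->
  grade_m1 br g a b n -> grade_0 br a b z -> grade_1 br g a b p ->
  n + z + p = 0 -> n = 0 /\ z = 0 /\ p = 0.
Proof.
move=> Pa Pb Hab Nn [[t az] [s bz]] Pp sum0.
have n0 : n = 0.
  apply: (grade_m1_scaled Pa Pb Hab (s := s) Nn).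
  have := congr1 (fun v => br a (br b v)) sum0.
  rewrite /= !brDr grade_m1_adK // bz (br_grade_1 Pb Pp) !br0r brZr addr0 => /eqP.
  by rewrite addrC subr_eq0 => /eqP ->.
have p0 : p = 0.
  have Hba : g b a = 1 by rewrite gC.
  apply: (grade_m1_scaled Pb Pa Hba (s := t) (proj1 (grade_1E _ _ _) Pp)).
  have := congr1 (fun v => br b (br a v)) sum0.
  rewrite /= n0 add0r !brDr (grade_1_adK Pa Pb Hab Pp) az brZr !br0r => /eqP.
  by rewrite subr_eq0 => /eqP ->.
by move: sum0; rewrite n0 p0 add0r addr0.
Qed.

Lemma grade_1_ad_image a b p :
  pure_extremal br a -> pure_extremal br b -> g a b = 1 ->
  grade_1 br g a b p <-> ad_image br b (grade_m1 br g a b) p.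
Proof.
move=> Pa Pb Hab; split=> [Pp | [n [Nn ->]]]; last exact: ad_grade_m1.
exists (- br a p); split; first exact: subspaceN (grade_m1_subspace a b) (ad_grade_1 Pa Pb Pp).
by rewrite brNr grade_1_adK ?opprK.
Qed.

Section StableSubspace.
Variables (a b : L) (P : L -> Prop).
Hypotheses (Pa : pure_extremal br a) (Pb : pure_extremal br b) (Hab : g a b = 1).
Hypotheses (SP : subspace P) (P_ad_a : ad_stable a P) (P_ad_b : ad_stable b P).

Lemma grade_1_inter_ad_image p :
  inter (grade_1 br g a b) P p <-> ad_image br b (inter (grade_m1 br g a b) P) p.
Proof.
split; last by case=> n [[Nn Pn] ->]; split; [exact: ad_grade_m1 | exact: P_ad_b].
case=> /(grade_1_ad_image _ Pa Pb Hab) [n [Nn ->]] Pbn; exists n; do !split => //.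
by rewrite -[n]opprK -(grade_m1_adK Pa Pb Hab Nn); apply/(subspaceN SP)/P_ad_a.
Qed.

Lemma dsum3_grading : (forall l, P l -> grU br g a b l) ->
  dsum3 P (inter (grade_m1 br g a b) P) (inter (grade_0 br a b) P)
          (inter (grade_1 br g a b) P).
Proof.
move=> P_grU; split; last first.
  by move=> n z p [Nn _] [Zz _] [Pp _]; apply: (grade_direct Pa Pb Hab Nn Zz Pp).
move=> l; split; last first.
  by case=> n [z [p [[_ Pn] [[_ Pz] [[_ Pp] ->]]]]]; do !apply: (subspaceD SP).
move=> Pl; have Ul := P_grU l Pl.
exists (- br a (br b l)), (l + br a (br b l) + br b (br a l)), (- br b (br a l)).
split; [split | split; [split | split; [split |]]].
- exact: grU_proj_m1.
- exact/(subspaceN SP)/P_ad_a/P_ad_b.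
- exact: grU_proj_0.
- by do 2?apply: (subspaceD SP); [| apply/P_ad_a/P_ad_b | apply/P_ad_b/P_ad_a].
- exact: grU_proj_1.
- exact/(subspaceN SP)/P_ad_b/P_ad_a.
- lincomb k.
Qed.

End StableSubspace.

Section CommutingPairs.
Variables x y c d : L.
Hypotheses (Px : pure_extremal br x) (Py : pure_extremal br y).
Hypotheses (Pc : pure_extremal br c) (Pd : pure_extremal br d).
Hypotheses (Hxy : g x y = 1) (Hcd : g c d = 1).
Hypotheses (Hxc : br x c = 0) (Hyc : br y c = 0) (Hxd : br x d = 0) (Hyd : br y d = 0).

Local Notation V := (inter (grade_m1 br g x y) (grade_m1 br g c d)).
Local Notation X := (inter (grade_m1 br g x y) (grade_0 br c d)).
Local Notation V' := (inter (grade_m1 br g x y) (grade_1 br g c d)).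
Local Notation X' := (inter (grade_0 br x y) (grade_m1 br g c d)).

Lemma dsum3_grade_m1_xy : dsum3 (grade_m1 br g x y) V X V'.
Proof.
apply: (dsum3_ext (fun l => iff_refl _) (interC _ _) (interC _ _) (interC _ _)).
apply: dsum3_grading Pc Pd Hcd (grade_m1_subspace x y) _ _ _.
- exact: (grade_m1_stable Px Py Hxc Hyc).
- exact: (grade_m1_stable Px Py Hxd Hyd).
- by move=> l [u [_ ->]]; apply: grU_br_commuting (br_eq0C Hxc) (br_eq0C Hxd).
Qed.

Lemma dsum3_grade_1_xy :
  dsum3 (grade_1 br g x y) (ad_image br y V) (ad_image br y X) (ad_image br y V').
Proof.
apply: (dsum3_ext (fun l => iff_sym (grade_1_ad_image l Px Py Hxy)) (fun l => iff_refl _)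
                  (fun l => iff_refl _) (fun l => iff_refl _)).
apply: dsum3_ad_image dsum3_grade_m1_xy => n Nn yn0.
by rewrite -[n]opprK -(grade_m1_adK Px Py Hxy Nn) yn0 br0r oppr0.
Qed.

Lemma dsum3_grade_m1_cd : dsum3 (grade_m1 br g c d) V X' (ad_image br y V).
Proof.
have SP := grade_m1_subspace c d.
have P_ad_x := grade_m1_stable Pc Pd (br_eq0C Hxc) (br_eq0C Hxd).
have P_ad_y := grade_m1_stable Pc Pd (br_eq0C Hyc) (br_eq0C Hyd).
apply: (dsum3_ext (fun l => iff_refl _) (fun l => iff_refl _) (fun l => iff_refl _)
                  (grade_1_inter_ad_image Px Py Hxy SP P_ad_x P_ad_y)).
apply: dsum3_grading Px Py Hxy SP P_ad_x P_ad_y _.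
by move=> l [u [_ ->]]; apply: grU_br_commuting Hxc Hyc.
Qed.

Lemma dsum3_grade_1_cd :
  dsum3 (grade_1 br g c d) V' (ad_image br d X') (ad_image br y V').
Proof.
have SP := grade_1_subspace c d.
have P_ad_x := grade_1_stable Pc Pd (br_eq0C Hxc) (br_eq0C Hxd).
have P_ad_y := grade_1_stable Pc Pd (br_eq0C Hyc) (br_eq0C Hyd).
have X'_ad_d := grade_1_inter_ad_image Pc Pd Hcd (grade_0_subspace x y)
  (grade_0_stable Hxc Hyc) (grade_0_stable Hxd Hyd).
have X'_comp l : inter (grade_0 br x y) (grade_1 br g c d) l <-> ad_image br d X' l.
  split=> [[Zl Pl] | [v [[Zv Nv] ->]]].
    by have [v [[Nv Zv] ->]] := (X'_ad_d l).1 (conj Pl Zl); exists v.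
  by have [] := (X'_ad_d _).2 (ex_intro _ v (conj (conj Nv Zv) erefl)).
apply: (dsum3_ext (fun l => iff_refl _) (fun l => iff_refl _) X'_comp
                  (grade_1_inter_ad_image Px Py Hxy SP P_ad_x P_ad_y)).
apply: dsum3_grading Px Py Hxy SP P_ad_x P_ad_y _.
by move=> l [u [_ ->]]; apply: grU_br_commuting Hxd Hyd.
Qed.

End CommutingPairs.

End ExtremalElements.

Theorem proposition5p7 (k : fieldType) (L : lmodType k) (br : L -> L -> L)
  (g : L -> L -> k)
  (Hlie : is_lie br) (Hsimple : simple_lie br)
  (Hk : exists a : k, a != 0 /\ a != 1)
  (Hgen : generated_by_pure_extremal br)
  (Hlines : exists k' : splittingFieldType k,
     galois 1%VS (@fullv _ k') /\ (\dim (@fullv _ k') <= 2)%N /\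
     exists (M : lmodType k') (brM : M -> M -> M) (emb : L -> M),
       is_lie brM /\ is_base_change br brM emb /\ has_lines brM)
  (Hsymp : exists a b, symplectic br a b)
  (Hg : extremal_form br g)
  (x y c d : L)
  (Hx : extremal br x) (Hy : extremal br y) (Hc : extremal br c) (Hd : extremal br d)
  (Hxy : g x y = 1) (Hcd : g c d = 1)
  (Sxc : symplectic br x c) (Scy : symplectic br c y)
  (Syd : symplectic br y d) (Sdx : symplectic br d x) :
  let V  := inter (grade_m1 br g x y) (grade_m1 br g c d) in
  let X  := inter (grade_m1 br g x y) (grade_0 br c d) in
  let V' := inter (grade_m1 br g x y) (grade_1 br g c d) in
  let X' := inter (grade_0 br x y) (grade_m1 br g c d) in
  dsum3 (grade_m1 br g x y) V X V' /\
  dsum3 (grade_1 br g x y) (ad_image br y V) (ad_image br y X) (ad_image br y V') /\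
  dsum3 (grade_m1 br g c d) V X' (ad_image br y V) /\
  dsum3 (grade_1 br g c d) V' (ad_image br d X') (ad_image br y V').
Proof.
move=> V X V' X'.
have [Px [Pc [_ [Hxc _]]]] := Sxc.
have [_ [Py [_ [Hcy _]]]] := Scy.
have [_ [Pd [_ [Hyd _]]]] := Syd.
have [_ [_ [_ [Hdx _]]]] := Sdx.
have Hyc := br_eq0C Hlie Hcy; have Hxd := br_eq0C Hlie Hdx.
split; [|split; [|split]].
- by apply: dsum3_grade_m1_xy.
- by apply: dsum3_grade_1_xy.
- by apply: dsum3_grade_m1_cd.
- by apply: dsum3_grade_1_cd.
Qed.
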